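(* Let $0<\varepsilon<1/4$ and $r=(10/\varepsilon^2)\log(1/\varepsilon)$. Let $G$ be a bipartite graph with at least one edge, and let $H$ be a balanced bipartite subgraph of $G$ with parts $A,B$, $|A|=|B|=m$, that maximizes $\Phi(F)=d_F^{\,r}\,v(F)$ over all balanced bipartite subgraphs $F$ of $G$. Assume $\varepsilon m$ is a positive integer. Let $A_1\subseteq A$, $B_1\subseteq B$ with $|A_1|=|B_1|=\varepsilon m$, and put $A_2=A\setminus A_1$, $B_2=B\setminus B_1$. Then $$d(A_2,B_2)< d_H\,(1+\varepsilon^3/3).$$
   Context: $\log$ is the natural logarithm; $v(F)$ is the number of vertices of $F$. A bipartite graph is balanced if its two parts have equal size. For disjoint vertex sets $X,Y$, $d(X,Y)=e(X,Y)/(|X|\,|Y|)$ (number of edges between $X$ and $Y$ divided by $|X||Y|$); the density $d_F$ of a bipartite graph $F$ is this quantity for its two parts. *)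

From HB Require Import structures.
From mathcomp Require Import all_boot all_order all_algebra.
From mathcomp Require Import all_classical all_reals.
From mathcomp Require Import exp.
Set Implicit Arguments. Unset Strict Implicit. Unset Printing Implicit Defensive.
Import Order.TTheory GRing.Theory Num.Theory.
Local Open Scope ring_scope.

Definition simple_graph (V : finType) (g : rel V) : Prop :=
  (forall x y, g x y = g y x) /\ (forall x, ~~ g x x).

Definition bipartite_graph (V : finType) (g : rel V) : Prop :=
  exists S : {set V}, forall x y, g x y -> (x \in S) != (y \in S).

Definition eXY (V : finType) (f : rel V) (X Y : {set V}) : nat :=
  #|[set p in finset.setX X Y | f p.1 p.2]|.

Definition dens (R : realType) (V : finType) (f : rel V) (X Y : {set V}) : R :=
  (eXY f X Y)%:R / (#|X| * #|Y|)%:R.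

Definition balanced_bip_sub (V : finType) (g : rel V) (X Y : {set V}) (f : rel V)
  : Prop :=
  [/\ [disjoint X & Y], #|X| = #|Y|,
      (forall x y, f x y = f y x),
      (forall x y, f x y -> g x y) &
      (forall x y, f x y -> (x \in X /\ y \in Y) \/ (x \in Y /\ y \in X))].

Definition Phi (R : realType) (V : finType) (r : R) (X Y : {set V}) (f : rel V) : R :=
  powR (dens R f X Y) r * (#|X| + #|Y|)%:R.

From HB Require Import structures.
From mathcomp Require Import all_boot all_order all_algebra.
From mathcomp Require Import all_classical all_reals.
From mathcomp Require Import exp.
From mathcomp Require Import ring lra.
Import Order.TTheory GRing.Theory Num.Theory.
Local Open Scope ring_scope.

(* Write r = (10/eps^2) ln(1/eps), q = 1 + eps^3/3 and d = d_H.
   Restricting the edges of H to A2 x B2 gives a balanced bipartite subgraph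
   F of G with v(F) = (1 - eps) v(H) and d_F = d(A2,B2).  If d(A2,B2) >= q d,
   maximality of H gives
        d^r q^r (1 - eps) v(H) <= Phi(F) <= Phi(H) = d^r v(H),
   and since d > 0 (a single edge already has Phi = 2 > 0) this forces
   q^r (1 - eps) <= 1.  But q^r = exp(r ln q) >= 1 + r ln q, and the
   elementary bound ln y >= 1 - 1/y applied to y = 1/eps and y = q shows
   (1 + r ln q)(1 - eps) > 1 whenever eps < 1/4, a contradiction. *)

Section RealEstimates.
Context {R : realType}.
Implicit Types (y q r eps : R).

Lemma ln_ge_1subV {y} : 0 < y -> 1 - y^-1 <= ln y.
Proof.
move=> y0; have yV0 : 0 < y^-1 by rewrite invr_gt0.
have := expR_ge1Dx (ln y^-1); rewrite lnK ?posrE // lnV ?posrE //; lra.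
Qed.

(* Convexity of t |-> q^t: the power lies above its tangent at t = 0. *)
Lemma powR_ge1_lin q r : 0 < q -> 1 + r * ln q <= powR q r.
Proof.
move=> q0; rewrite /powR (negbTE (lt0r_neq0 q0)); exact: expR_ge1Dx.
Qed.

(* The numerical heart of the choice of r: with L = ln(1/eps) and
   M = ln(1 + eps^3/3), the two logarithmic bounds L >= 1 - eps and
   (3 + eps^3) M >= eps^3 give 10 L M (1 - eps) > eps^3 for eps < 1/4. *)
Lemma log_product_bound {eps} : 0 < eps -> eps < 1 / 4 ->
  eps ^+ 3 < 10 * ln (1 / eps) * ln (1 + eps ^+ 3 / 3) * (1 - eps).
Proof.
move=> e0 e14; set q := 1 + eps ^+ 3 / 3.
have q0 : 0 < q by rewrite /q; have := exprn_gt0 3 e0; lra.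
have L1 : 1 - eps <= ln (1 / eps).
  by have := ln_ge_1subV (divr_gt0 ltr01 e0); rewrite invf_div divr1.
have L2 : eps ^+ 3 <= (3 + eps ^+ 3) * ln q.
  have pos3 : 0 < 3 + eps ^+ 3 by have := exprn_gt0 3 e0; lra.
  have := ln_ge_1subV q0.
  have -> : 1 - q^-1 = eps ^+ 3 / (3 + eps ^+ 3).
    by rewrite /q; field; exact: lt0r_neq0.
  by move=> /(ler_wpM2l (ltW pos3)); rewrite mulrCA divff ?mulr1 ?gt_eqF.
have e3 : 0 < eps ^+ 3 by apply: exprn_gt0.
have e3le : eps ^+ 3 <= 1 by rewrite exprn_ile1 //; lra.
set c := eps ^+ 3 in e3 e3le L2 *; set L := ln (1 / eps) in L1 *.
set M := ln q in L2 *.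
have LMbound : (1 - eps) * c <= L * ((3 + c) * M).
  apply: (@le_trans _ _ (L * c)); first by apply: ler_wpM2r; [lra|].
  by apply: ler_wpM2l; [lra|].
(* 3 + c < 10 (1 - eps)^2 since eps < 1/4. *)
have big : (3 + c) * c < 10 * (1 - eps) * ((1 - eps) * c).
  by rewrite mulrA ltr_pM2r //; nra.
have : (3 + c) * c < (3 + c) * (10 * L * M * (1 - eps)).
  have -> : (3 + c) * (10 * L * M * (1 - eps))
          = 10 * (1 - eps) * (L * ((3 + c) * M)) by ring.
  by apply: (lt_le_trans big); apply: ler_wpM2l; [lra|].
by rewrite ltr_pM2l //; lra.
Qed.

(* The choice r = (10/eps^2) ln(1/eps) makes a density gain of the factor
   1 + eps^3/3 outweigh the loss of an eps-fraction of the vertices. *)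
Lemma powR_growth_beats_loss {eps} : 0 < eps -> eps < 1 / 4 ->
  1 < powR (1 + eps ^+ 3 / 3) (10 / eps ^+ 2 * ln (1 / eps)) * (1 - eps).
Proof.
move=> e0 e14; set q := 1 + eps ^+ 3 / 3.
have q0 : 0 < q by rewrite /q; have := exprn_gt0 3 e0; lra.
have e2 : 0 < eps ^+ 2 by apply: exprn_gt0.
apply: (@lt_le_trans _ _ ((1 + 10 / eps ^+ 2 * ln (1 / eps) * ln q) * (1 - eps))).
  2: by apply: ler_wpM2r; [lra | exact: powR_ge1_lin].
have -> : (1 + 10 / eps ^+ 2 * ln (1 / eps) * ln q) * (1 - eps)
        = 1 - eps + (10 * ln (1 / eps) * ln q * (1 - eps)) / eps ^+ 2.
  by field; exact: lt0r_neq0.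
rewrite -ltrBlDl opprB addrC subrK ltr_pdivlMr // -exprS.
exact: log_product_bound.
Qed.

Lemma powR_density_boost {r d d' q n n'} : 0 <= r -> 0 < d -> 0 <= q ->
  d * q <= d' -> powR d' r * n' <= powR d r * n -> 0 <= n' ->
  powR q r * n' <= n.
Proof.
move=> r0 d0 q0 dq hPhi n'0.
have dr0 : 0 < powR d r by apply: powR_gt0.
have boost : powR d r * powR q r <= powR d' r.
  have dq0 : 0 <= d * q by apply: mulr_ge0 => //; exact: ltW.
  rewrite -powRM ?(ltW d0) //.
  by apply: (ge0_ler_powR r0 _ _ dq); rewrite nnegrE //; exact: le_trans dq.
rewrite -(ler_pM2l dr0) mulrA; apply: le_trans hPhi.
exact: ler_wpM2r.
Qed.

End RealEstimates.

Section Subgraphs.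
Context {V : finType} {g : rel V}.

Definition restrict_rel (f : rel V) (X Y : {set V}) : rel V :=
  fun a b => f a b && (((a \in X) && (b \in Y)) || ((a \in Y) && (b \in X))).

Lemma eXY_restrict (f : rel V) (X Y : {set V}) :
  eXY (restrict_rel f X Y) X Y = eXY f X Y.
Proof.
rewrite /eXY; apply: eq_card => -[a b]; rewrite !inE /= /restrict_rel.
by case: (a \in X); case: (b \in Y); case: (f a b).
Qed.

Lemma dens_restrict (R : realType) (f : rel V) (X Y : {set V}) :
  dens R (restrict_rel f X Y) X Y = dens R f X Y.
Proof. by rewrite /dens eXY_restrict. Qed.

Lemma balanced_bip_sub_restrict (f : rel V) (X Y : {set V}) :
  (forall x y, f x y = f y x) -> (forall x y, f x y -> g x y) ->
  [disjoint X & Y] -> #|X| = #|Y| ->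
  balanced_bip_sub g X Y (restrict_rel f X Y).
Proof.
move=> fsym fg dXY cXY; split=> //.
- by move=> a b; rewrite /restrict_rel fsym orbC; congr (_ && (_ || _));
    rewrite andbC.
- by move=> a b /andP[/fg].
- by move=> a b /andP[_ /orP[/andP[-> ->]|/andP[-> ->]]]; [left|right].
Qed.

Lemma dens_ge0 (R : realType) (f : rel V) (X Y : {set V}) : 0 <= dens R f X Y.
Proof. by rewrite /dens divr_ge0. Qed.

Lemma edge_subgraph (R : realType) {x y : V} : simple_graph g -> g x y ->
  exists X Y f, balanced_bip_sub g X Y f /\ 0 < dens R f X Y /\
                (0 < #|X| + #|Y|)%N.
Proof.
move=> [gsym girr] gxy.
have xy : x != y by apply: contraTneq gxy => ->; exact: girr.
exists [set x], [set y], (restrict_rel g [set x] [set y]); split.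
  by apply: balanced_bip_sub_restrict => //; rewrite ?disjoints1 ?inE ?cards1.
split; last by rewrite cards1.
rewrite dens_restrict /dens !cards1 divr1 ltr0n; apply/card_gt0P.
by exists (x, y); rewrite !inE /= !eqxx.
Qed.

(* A maximizer of Phi for a positive exponent r has positive density as
   soon as g has an edge, because then some competitor has Phi > 0. *)
Lemma maximizer_dens_pos {R : realType} {r : R} {A B : {set V}} {h : rel V} :
  0 < r -> simple_graph g -> (exists x y, g x y) ->
  (forall X Y f, balanced_bip_sub g X Y f -> Phi r X Y f <= Phi r A B h) ->
  0 < dens R h A B.
Proof.
move=> r0 gsimple [x [y gxy]] Hmax.
have [X [Y [f [Hf [df nXY]]]]] := edge_subgraph R gsimple gxy.
have PhiH : 0 < Phi r A B h.
  apply: lt_le_trans (Hmax _ _ _ Hf).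
  by rewrite /Phi mulr_gt0 ?ltr0n // powR_gt0.
rewrite lt_def dens_ge0 andbT; apply: contraTneq PhiH => d0.
by rewrite /Phi d0 powR0 ?mul0r ?ltxx // gt_eqF.
Qed.

End Subgraphs.

Theorem lemma3p4 (R : realType) (V : finType) (g : rel V) (eps : R)
    (A B : {set V}) (h : rel V) (A1 B1 : {set V}) (k : nat) :
  0 < eps -> eps < 1 / 4 ->
  simple_graph g -> bipartite_graph g -> (exists x y, g x y) ->
  balanced_bip_sub g A B h ->
  (forall (X Y : {set V}) (f : rel V), balanced_bip_sub g X Y f ->
     Phi (10 / eps ^+ 2 * ln (1 / eps)) X Y f
     <= Phi (10 / eps ^+ 2 * ln (1 / eps)) A B h) ->
  eps * (#|A|)%:R = k%:R -> (0 < k)%N ->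
  A1 \subset A -> B1 \subset B -> #|A1| = k -> #|B1| = k ->
  dens R h (A :\: A1) (B :\: B1) < dens R h A B * (1 + eps ^+ 3 / 3).
Proof.
move=> e0 e14 gsimple _ gedge [dAB cAB hsym hg _] Hmax ek k0 A1A B1B cA1 cB1.
set r := 10 / eps ^+ 2 * ln (1 / eps) in Hmax.
have r0 : 0 < r.
  rewrite /r mulr_gt0 ?divr_gt0 ?exprn_gt0 // ln_gt0 // ltr_pdivlMr //; lra.
have d0 := maximizer_dens_pos r0 gsimple gedge Hmax.
set m := #|A| in ek; set A2 := A :\: A1; set B2 := B :\: B1.
have km : (k <= m)%N by rewrite -cA1 subset_leq_card.
have cA2 : #|A2| = (m - k)%N by rewrite cardsDS // cA1.
have cB2 : #|B2| = (m - k)%N by rewrite cardsDS // cB1 -cAB.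
have sizeF : (#|A2| + #|B2|)%:R = (1 - eps) * (m + m)%:R :> R.
  by rewrite cA2 cB2 natrD natrB // -ek natrD; ring.
have HF : balanced_bip_sub g A2 B2 (restrict_rel h A2 B2).
  apply: balanced_bip_sub_restrict => //; last by rewrite cA2 cB2.
  exact: disjointWl (subsetDl _ _) (disjointWr (subsetDl _ _) dAB).
have PhiF := Hmax _ _ _ HF.
rewrite /Phi dens_restrict sizeF -cAB -/m in PhiF.
rewrite ltNge; apply/negP => boost.
have m0 : 0 < (m + m)%:R :> R.
  by rewrite ltr0n addn_gt0 (leq_trans k0 km).
(* Maximality of H forces q^r (1 - eps) <= 1 ... *)
have bound : powR (1 + eps ^+ 3 / 3) r * ((1 - eps) * (m + m)%:R) <= (m + m)%:R.
  have q0 : 0 <= 1 + eps ^+ 3 / 3 by have := exprn_gt0 3 e0; lra.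
  have n'0 : 0 <= (1 - eps) * (m + m)%:R by apply: mulr_ge0; [lra | exact: ltW].
  exact: (powR_density_boost (ltW r0) d0 q0 boost PhiF n'0).
(* ... which the choice of r rules out. *)
have := powR_growth_beats_loss e0 e14.
rewrite -/r -(ltr_pM2r m0) mul1r -mulrA => /lt_le_trans/(_ bound).
by rewrite ltxx.
Qed.
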